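(* Let $G$ be a graph, $R$ a connected subset of $V(G)$, $s_R\in R$, and let $\mathcal{P}$ be an $R$-shortest path collection. Then for all $u_1,u_2\in U_{\mathcal{P}}$, if $\widehat{\operatorname{prof}}_{R,\mathcal{P}}[u_1]=\widehat{\operatorname{prof}}_{R,\mathcal{P}}[u_2]$ then $\operatorname{prof}_{R,s_R}[u_1]=\operatorname{prof}_{R,s_R}[u_2]$.
   Context: $G$ is an unweighted undirected graph with shortest-path distance $\mathrm{dist}$, and $\mathrm{dist}(v,R)=\min_{y\in R}\mathrm{dist}(v,y)$; $R$ is connected if $G[R]$ is connected. $|Q|$ is the number of edges of a path $Q$, $P[a,b]$ the subpath between $a$ and $b$. For $z\in V(G)$ and $x\in R$, the distance profile $\operatorname{prof}_{R,x}[z]\colon R\to\mathbb{Z}$ is $\operatorname{prof}_{R,x}[z](s)=\mathrm{dist}(z,s)-\mathrm{dist}(z,x)$. Milestones: for a path $P$ from a vertex $v^P$ to a vertex $x^P\in R$ with $|P|=\mathrm{dist}(v^P,R)$, order $V(P)$ from $v^P$ towards $x^P$; $v\in V(P)$ is a milestone of $P$ if $v=x^P$ or $\operatorname{prof}_{R,x^P}[v]\ne \operatorname{prof}_{R,x^P}[u]$ where $u$ is the next vertex after $v$ towards $x^P$. An $R$-shortest path collection is a collection $\mathcal{P}$ of paths in $G$ such that every $P\in\mathcal{P}$ is a path from some $v^P\in V(G)$ to some $x^P\in R$ with $|P|=\mathrm{dist}(v^P,R)$, and $R\subseteq\bigcup_{P\in\mathcal{P}}V(P)$. Let $H_{\mathcal{P}}$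 be the union of the paths of $\mathcal{P}$. A vertex is an anchor vertex if it has degree more than two in $H_{\mathcal{P}}$ or it is a milestone of some $P\in\mathcal{P}$; $A_R(\mathcal{P})$ is the set of anchor vertices. For $P\in\mathcal{P}$ and an anchor $w\in V(P)$, the prefix of $w$ in $P$ is the vertex set of the maximal subpath $Q$ of $P[v^P,w]$ such that $w$ is the only anchor vertex of $P$ in $Q$. Let $U_{\mathcal{P}}=V(G)\setminus\bigcup_{P\in\mathcal{P}}V(P)$. For $u\in U_{\mathcal{P}}$ and $w\in A_R(\mathcal{P})$, define $\widehat{\mathrm{dist}}(u,w)=\min\{|Q_{u,z}|+|P[z,w]| : P\in\mathcal{P},\ w\in V(P),\ z \text{ in the prefix of } w \text{ in } P\}$, where $Q_{u,z}$ is a shortest path among the paths from $u$ to $z$ all of whose internal vertices lie in $U_{\mathcal{P}}$ (terms for which no such path exists are omitted, and $\widehat{\mathrm{dist}}(u,w)=\infty$ if no term remains). The anchor-distance profile is $\operatorname{prof}^*_{R,\mathcal{P}}[u](w)=\widehat{\mathrm{dist}}(u,w)+\mathrm{dist}(w,R)-\mathrm{dist}(u,R)$ for $w\in A_R(\mathcal{P})$, and $\widehat{\operatorname{prof}}_{R,\mathcal{P}}[u](w)=\min\{\operatorname{prof}^*_{R,\mathcal{P}}[u](w),|R|+1\}$. *)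

From mathcomp Require Import all_boot all_order all_algebra.
Set Implicit Arguments. Unset Strict Implicit. Unset Printing Implicit Defensive.
Import Order.TTheory GRing.Theory Num.Theory.

Section Graph.
Variables (T : finType) (e : rel T).

Definition simple_graph := symmetric e /\ irreflexive e.
Definition graph_connected := forall x y : T, connect e x y.

(* walk of length n from x to y whose internal vertices satisfy ok *)
Definition walk_ok (ok : pred T) (n : nat) (x y : T) : bool :=
  [exists p : n.-tuple T,
     [&& path e x p, last x p == y & all ok (behead (belast x p))]].

(* least length of such a walk (a shortest one has < #|T| edges); None if none *)
Definition rdist (ok : pred T) (x y : T) : option nat :=
  let n := find (fun n => walk_ok ok n x y) (iota 0 #|T|) in
  if n < #|T| then Some n else None.

(* shortest-path distance (graph assumed connected; value #|T| if unreachable) *)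
Definition dist (x y : T) : nat := odflt #|T| (rdist predT x y).

Definition distR (R : {set T}) (v : T) : nat := \big[minn/#|T|]_(y in R) dist v y.

Definition set_connected (R : {set T}) : Prop :=
  forall x y, x \in R -> y \in R ->
    connect (fun a b => [&& e a b, a \in R & b \in R]) x y.

(* distance profile prof_{R,x}[z](s) = dist(z,s) - dist(z,x) *)
Definition prof (x z s : T) : int := ((dist z s)%:Z - (dist z x)%:Z)%R.

(* paths: a path is the sequence of its vertices v^P = first, x^P = last *)
Definition is_path (P : seq T) : bool :=
  if P is v :: p then path e v p && uniq P else false.

Definition plen (P : seq T) : nat := (size P).-1.

Definition shortest_collection (R : {set T}) (Ps : seq (seq T)) : Prop :=
  (forall P, P \in Ps ->
     exists v p, [/\ P = v :: p, is_path P, last v p \in R & plen P = distR R v])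
  /\ (forall x, x \in R -> has (fun P => x \in P) Ps).

Section Collection.
Variables (R : {set T}) (Ps : seq (seq T)).

Definition pnext (P : seq T) (v : T) : T := nth v P (index v P).+1.

(* milestone (profiles are compared as functions on R) *)
Definition milestone (P : seq T) (v : T) : bool :=
  (v \in P) &&
  ((v == last v P) ||
   [exists s in R, prof (last v P) v s != prof (last v P) (pnext P v) s]).

Definition hedge (a b : T) : bool :=
  has (fun P => ((a, b) \in zip P (behead P)) || ((b, a) \in zip P (behead P))) Ps.

Definition hdeg (w : T) : nat := #|[set y | hedge w y]|.

Definition anchor (w : T) : bool :=
  (2 < hdeg w) || has (fun P => milestone P w) Ps.

Definition inU (u : T) : bool := ~~ has (fun P => u \in P) Ps.

Definition inprefix (P : seq T) (w z : T) : bool :=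
  [&& z \in P, w \in P, index z P <= index w P &
      all (fun y => ~~ anchor y)
          (take (index w P - index z P) (drop (index z P) P))].

Definition distU (u z : T) : option nat := rdist inU u z.

(* candidate values |Q_{u,z}| + |P[z,w]| *)
Definition dhat_cands (u w : T) : seq nat :=
  flatten [seq flatten [seq (if distU u z is Some d
                              then [:: d + (index w P - index z P)] else [::])
                            | z <- P & inprefix P w z]
          | P <- Ps & w \in P].

(* None stands for infinity *)
Definition dhat (u w : T) : option nat :=
  if dhat_cands u w is c :: cs then Some (\big[minn/c]_(x <- c :: cs) x) else None.

(* \hat{prof}_{R,P}[u](w) = min(prof*(w), |R|+1), with infinity capped to |R|+1 *)
Definition hprof (u w : T) : int :=
  match dhat u w with
  | None => ((#|R|.+1)%:Z)%R
  | Some d => (Num.min (d%:Z + (distR R w)%:Z - (distR R u)%:Z) (#|R|.+1)%:Z)%R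
  end.

End Collection.
End Graph.

From Pilot Require Import Defs.
From mathcomp Require Import all_boot all_order all_algebra zify.
Set Implicit Arguments. Unset Strict Implicit. Unset Printing Implicit Defensive.
Import Order.TTheory GRing.Theory Num.Theory.

(* For u in U and s in R, dist(u,s) - dist(u,R) is the minimum over anchors w
   of prof^*[u](w) + dist(w,s) - dist(w,R).  Every such term is an upper bound
   because dhat(u,w) is the length of a u-w walk.  The minimum is attained:
   follow a shortest u-s path up to its first vertex z outside U, which lies on
   some P in the collection, then follow P from z to the first anchor w.  The
   vertices from z up to w (excluded) are not milestones and P is shortest to
   R, so each step along P lowers the distance to s by exactly one.  The cap |R|+1
   in hprof never interferes, since dist(u,s) - dist(u,R) < |R| when R is
   connected.  Hence equal hprof give equal dist(.,s) - dist(.,R) on R, and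
   prof_{R,sR}[u](s) is a difference of two such values. *)

Section Walks.
Variables (T : finType) (e : rel T).

Lemma walk_okP (ok : pred T) n x y :
  reflect (exists r, [/\ size r = n, path e x r, last x r = y
                       & all ok (behead (belast x r))])
          (walk_ok e ok n x y).
Proof.
apply: (iffP existsP) => [[r /and3P[xr /eqP ry okr]]|[r [<- xr ry okr]]].
  by exists r; rewrite size_tuple.
by exists (in_tuple r); rewrite /= xr ry eqxx.
Qed.

Lemma rdist_le_walk (ok : pred T) n x y :
  walk_ok e ok n x y -> n < #|T| -> exists2 m, rdist e ok x y = Some m & m <= n.
Proof.
move=> walk_n n_lt; rewrite /rdist.
set m := find _ _; have m_le : m <= n.
  by rewrite leqNgt; apply/negP => /(before_find 0); rewrite nth_iota // add0n walk_n.
by rewrite (leq_ltn_trans m_le n_lt); exists m.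
Qed.

Lemma rdist_Some_walk (ok : pred T) m x y :
  rdist e ok x y = Some m -> walk_ok e ok m x y /\ m < #|T|.
Proof.
rewrite /rdist; case: ifP => // m_lt [<-]; split => //.
have : has (fun n => walk_ok e ok n x y) (iota 0 #|T|) by rewrite has_find size_iota.
by move/(nth_find 0); rewrite nth_iota.
Qed.

Lemma dist_le_card x y : dist e x y <= #|T|.
Proof. by rewrite /dist /rdist; case: ifP => // /ltnW. Qed.

Lemma dist_le_path x r : path e x r -> dist e x (last x r) <= size r.
Proof.
move=> xr; have [r_lt|] := ltnP (size r) #|T|; last exact: leq_trans (dist_le_card _ _).
have walk_r : walk_ok e predT (size r) x (last x r).
  by apply/walk_okP; exists r; rewrite all_predT.
by have [m rdist_m m_le] := rdist_le_walk walk_r r_lt; rewrite /dist rdist_m.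
Qed.

Lemma dist_le_walk (ok : pred T) n x y : walk_ok e ok n x y -> dist e x y <= n.
Proof. by case/walk_okP => r [<- xr <- _]; exact: dist_le_path. Qed.

Lemma dist_xx x : dist e x x = 0.
Proof. by apply/eqP; rewrite -leqn0; exact: (@dist_le_path x [::]). Qed.

Lemma dist_le_edge x y : e x y -> dist e x y <= 1.
Proof. by move=> xy; apply: (@dist_le_path x [:: y]); rewrite /= xy. Qed.

Hypothesis connected : graph_connected e.

Lemma rdist_predT x y : rdist e predT x y = Some (dist e x y).
Proof.
have [p xp py] := connectP (connected x y).
case/shortenP: xp py => r xr uniq_r _ ry.
have r_lt : size r < #|T|.
  by rewrite cardT (uniq_leq_size uniq_r) // => z; rewrite mem_enum.
have walk_r : walk_ok e predT (size r) x y.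
  by apply/walk_okP; exists r; rewrite all_predT.
by have [m rdist_m _] := rdist_le_walk walk_r r_lt; rewrite /dist rdist_m.
Qed.

Lemma dist_lt_card x y : dist e x y < #|T|.
Proof. exact: (rdist_Some_walk (rdist_predT x y)).2. Qed.

Lemma shortest_path x y :
  exists r, [/\ path e x r, last x r = y & size r = dist e x y].
Proof.
by have [/walk_okP[r [? ? ? _]] _] := rdist_Some_walk (rdist_predT x y); exists r.
Qed.

Lemma dist_triangle x y z : dist e x z <= dist e x y + dist e y z.
Proof.
have [r1 [xr1 r1y <-]] := shortest_path x y.
have [r2 [yr2 r2z <-]] := shortest_path y z.
have := @dist_le_path x (r1 ++ r2); rewrite last_cat r1y r2z size_cat; apply.
by rewrite cat_path xr1 r1y.
Qed.

Lemma dist_nth_le x0 x p i j : path e x p -> i <= j <= size p ->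
  dist e (nth x0 (x :: p) i) (nth x0 (x :: p) j) <= j - i.
Proof.
move=> /(pathP x0) xp; elim: j => [|j IHj] /andP[i_le j_le].
  by rewrite leqn0 in i_le; rewrite (eqP i_le) dist_xx.
case: (ltngtP i j.+1) i_le => // [i_lt|<-] _; last by rewrite dist_xx.
apply: leq_trans (dist_triangle _ (nth x0 (x :: p) j) _) _.
have := IHj; rewrite -ltnS i_lt ltnW //= => /(_ isT).
have := dist_le_edge (xp j j_le); lia.
Qed.

End Walks.

Section DistToSet.
Variables (T : finType) (e : rel T) (R : {set T}).

Lemma distR_le v y : y \in R -> distR e R v <= dist e v y.
Proof. exact: (@bigmin_le_cond _ nat T #|T| y (mem R)). Qed.

Lemma distR_attained v y : y \in R -> exists2 r, r \in R & distR e R v = dist e v r.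
Proof.
move=> yR; rewrite /distR.
have [r rR ->] := @eq_bigmin _ nat T #|T| y (mem R) (dist e v) yR
  (fun r _ => dist_le_card e v r).
by exists r.
Qed.

Lemma dist_lt_card_set r s : set_connected e R -> r \in R -> s \in R ->
  dist e r s < #|R|.
Proof.
move=> connR rR sR; have [p rp ps] := connectP (connR r s rR sR).
case/shortenP: rp ps => p' rp' uniq_p' _ ->.
have p'R : all (mem R) p'.
  by elim: p' (r) rp' {uniq_p'} => //= a q IH b /andP[/and3P[_ _ ->] /IH].
have size_le : size (r :: p') <= #|R|.
  rewrite cardE (uniq_leq_size uniq_p') // => z; rewrite inE mem_enum.
  by case/predU1P => [-> //|]; apply/allP.
apply: leq_ltn_trans size_le; apply: dist_le_path.
by apply: sub_path rp' => a b /and3P[].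
Qed.

Lemma dist_lt_distR_add_card u s : graph_connected e -> set_connected e R ->
  s \in R -> dist e u s < distR e R u + #|R|.
Proof.
move=> connected connR sR; have [r rR ->] := distR_attained u sR.
have := dist_triangle connected u r s; have := dist_lt_card_set connR rR sR; lia.
Qed.

End DistToSet.

Section ShortestCollection.
Variables (T : finType) (e : rel T) (R : {set T}) (Ps : seq (seq T)).
Hypotheses (connected : graph_connected e) (coll : shortest_collection e R Ps).

Local Notation anchor := (anchor e R Ps).

Lemma shortest_collection_path P : P \in Ps ->
  exists v q, [/\ P = v :: q, path e v q, uniq (v :: q), last v q \in R
                & size q = distR e R v].
Proof.
case: coll => path_coll _ /path_coll[v [q [-> /andP[vq uniq_vq] lastR size_q]]].
by exists v, q.
Qed.

Section OnePath.
Variables (v : T) (q : seq T).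
Hypotheses (P_in : v :: q \in Ps) (vq : path e v q) (uniq_P : uniq (v :: q))
  (lastR : last v q \in R) (size_q : size q = distR e R v).

Local Notation P := (v :: q).

Lemma nth_size_last : nth v P (size q) = last v q.
Proof. by rewrite -[size q]/((size P).-1) nth_last. Qed.

Lemma dist_nth_last l : l <= size q -> dist e (nth v P l) (last v q) = size q - l.
Proof.
move=> l_le; apply/eqP; rewrite eqn_leq -{1}nth_size_last.
rewrite (dist_nth_le connected v vq) ?l_le ?leqnn //=.
have := @dist_nth_le _ _ connected v v q 0 l vq; rewrite l_le subn0 => /(_ isT) /=.
have := distR_le e v lastR; have := dist_triangle connected v (nth v P l) (last v q).
lia.
Qed.

Lemma anchor_last : anchor (last v q).
Proof.
by apply/orP; right; apply/hasP; exists P; rewrite // /milestone mem_last /= eqxx.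
Qed.

Lemma dist_nth_succ l s : l < size q -> ~~ anchor (nth v P l) -> s \in R ->
  dist e (nth v P l) s = (dist e (nth v P l.+1) s).+1.
Proof.
move=> l_lt nanc sR.
have l_lt' : l < size P by rewrite ltnW.
have : ~~ milestone e R P (nth v P l) by apply: (hasPn (norP nanc).2).
rewrite /milestone mem_nth // negb_or => /andP[_ /exists_inPn /(_ s sR)].
rewrite negbK /pnext index_uniq // (set_nth_default v) // /prof => /eqP.
by rewrite !dist_nth_last // ?ltnW //; lia.
Qed.

Lemma dist_nth_nonanchor i j s : i <= j <= size q ->
  (forall l, i <= l < j -> ~~ anchor (nth v P l)) -> s \in R ->
  dist e (nth v P i) s = dist e (nth v P j) s + (j - i).
Proof.
move=> /andP[+ j_le] nanc sR; elim: j j_le nanc => [|j IHj] j_le nanc i_le.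
  by rewrite leqn0 in i_le; rewrite (eqP i_le) addn0.
case: (ltngtP i j.+1) i_le => // [i_lt|<-] _; last by rewrite subnn addn0.
have nanc' l : i <= l < j -> ~~ anchor (nth v P l).
  by case/andP=> il lj; apply: nanc; rewrite il ltnS (ltnW lj).
rewrite (IHj (ltnW j_le) nanc' i_lt) (@dist_nth_succ j) //; first lia.
by apply: nanc; rewrite ltnSn andbT -ltnS.
Qed.

Lemma first_anchor i : i <= size q -> exists j, [/\ i <= j <= size q,
  anchor (nth v P j) & forall l, i <= l < j -> ~~ anchor (nth v P l)].
Proof.
move=> i_le; have ex : exists j, (i <= j) && anchor (nth v P j).
  by exists (size q); rewrite i_le nth_size_last anchor_last.
case: (ex_minnP ex) => j /andP[i_j anc_j] min_j; exists j; split => //.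
  by rewrite i_j min_j // i_le nth_size_last anchor_last.
move=> l /andP[i_l l_j]; apply/negP => anc_l.
by have := min_j l; rewrite i_l anc_l; lia.
Qed.

Lemma inprefix_nth i j : i <= j <= size q ->
  (forall l, i <= l < j -> ~~ anchor (nth v P l)) ->
  inprefix e R Ps P (nth v P j) (nth v P i).
Proof.
move=> /andP[i_j j_le] nanc.
have lt_P k : k <= size q -> k < size P by [].
rewrite /inprefix !mem_nth ?lt_P ?(leq_trans i_j) //.
rewrite !index_uniq ?lt_P ?(leq_trans i_j) //.
apply/(all_nthP v) => k; rewrite size_take_min size_drop /= => k_lt.
have k_lt' : k < j - i by lia.
by rewrite nth_take // nth_drop nanc //; lia.
Qed.

End OnePath.

Local Notation dhat := (dhat e R Ps).
Local Notation dhat_cands := (dhat_cands e R Ps).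

Lemma dhat_le_cand u w c : c \in dhat_cands u w ->
  exists2 m, dhat u w = Some m & m <= c.
Proof.
rewrite /Defs.dhat; case: dhat_cands => [|c0 cs] // c_in.
exists (\big[minn/c0]_(x <- c0 :: cs) x) => //.
exact: (@ge_bigmin_seq _ nat _ _ _ _ _ _ c_in).
Qed.

Lemma dhat_mem_cands u w m : dhat u w = Some m -> m \in dhat_cands u w.
Proof.
rewrite /Defs.dhat; case: dhat_cands => [|c cs] //= [<-].
rewrite big_seq; apply: (big_ind (fun x => x \in c :: cs)) => //; first exact: mem_head.
by move=> a b; rewrite /minn; case: ltnP.
Qed.

Lemma dist_le_dhat u w s m : dhat u w = Some m -> dist e u s <= m + dist e w s.
Proof.
move=> /dhat_mem_cands /flatten_mapP[P]; rewrite mem_filter => /andP[wP P_in].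
move=> /flatten_mapP[z]; rewrite mem_filter => /andP[/and4P[_ _ z_w _] zP].
case distU_a: (distU e Ps u z) => [a|] //; rewrite inE => /eqP ->.
have [v [q [EP vq _ _ _]]] := shortest_collection_path P_in; subst P.
have uz : dist e u z <= a by exact: dist_le_walk (rdist_Some_walk distU_a).1.
have zw : dist e z w <= index w (v :: q) - index z (v :: q).
  rewrite -{1}(nth_index v zP) -{1}(nth_index v wP) (dist_nth_le connected v vq) //.
  by rewrite z_w -ltnS index_mem.
have := dist_triangle connected u z s; have := dist_triangle connected z w s; lia.
Qed.

Lemma exists_exit_vertex u s : inU Ps u -> s \in R -> exists z a,
  [/\ ~~ inU Ps z, distU e Ps u z = Some a & a + dist e z s <= dist e u s].
Proof.
move=> uU sR; have sNU : ~~ inU Ps s by rewrite negbK coll.2.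
have [p [up ps size_p]] := shortest_path connected u s.
have has_p : has (predC (inU Ps)) p.
  apply/hasP; exists s => //; move: (mem_last u p); rewrite ps inE.
  by case/predU1P => // su; rewrite su uU in sNU.
move: up ps size_p; case: (split_find has_p) => z p1 p2 /= zNU p1U.
rewrite cat_path last_cat last_rcons size_cat size_rcons => /andP[up1z zp2] p2s size_p.
have walk_p1z : walk_ok e (inU Ps) (size p1).+1 u z.
  apply/walk_okP; exists (rcons p1 z); rewrite size_rcons last_rcons belast_rcons.
  by split=> //; apply/allP => y /(hasPn p1U) /negPn.
have [|a distU_a a_le] := rdist_le_walk walk_p1z.
  by apply: leq_ltn_trans (dist_lt_card connected u s); rewrite -size_p leq_addr.
exists z, a; split => //.
have := dist_le_path zp2; rewrite p2s; lia.
Qed.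

Lemma exists_anchor_dhat u s : inU Ps u -> s \in R -> exists2 w, anchor w &
  exists2 m, dhat u w = Some m & m + dist e w s <= dist e u s.
Proof.
move=> uU sR; have [z [a [zNU distU_a a_le]]] := exists_exit_vertex uU sR.
move: zNU; rewrite negbK => /hasP[P P_in zP].
have [v [q [EP vq uniq_P lastR size_q]]] := shortest_collection_path P_in; subst P.
have i_le : index z (v :: q) <= size q by rewrite -ltnS index_mem.
have [j [ij anc_j nanc]] := first_anchor P_in vq uniq_P lastR size_q i_le.
have j_lt : j < size (v :: q) by case/andP: ij.
set w := nth v (v :: q) j in anc_j *.
have z_eq : nth v (v :: q) (index z (v :: q)) = z by exact: nth_index.
have cand : a + (j - index z (v :: q)) \in dhat_cands u w.
  apply/flatten_mapP; exists (v :: q); first by rewrite mem_filter mem_nth.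
  apply/flatten_mapP; exists z; last by rewrite distU_a index_uniq // mem_head.
  by rewrite mem_filter zP -{1}z_eq (inprefix_nth P_in vq uniq_P lastR size_q).
have [m dhat_m m_le] := dhat_le_cand cand.
exists w => //; exists m => //.
move: m_le (dist_nth_nonanchor P_in vq uniq_P lastR size_q ij nanc sR).
rewrite z_eq -/w; lia.
Qed.

End ShortestCollection.

Section DistExcess.
Variables (T : finType) (e : rel T) (R : {set T}) (Ps : seq (seq T)).
Hypotheses (connected : graph_connected e) (connR : set_connected e R)
  (coll : shortest_collection e R Ps).

Local Open Scope ring_scope.

Definition dist_excess (u s : T) : int := (dist e u s)%:Z - (distR e R u)%:Z.

Definition anchor_estimate (u w s : T) : int :=
  hprof e R Ps u w - (distR e R w)%:Z + (dist e w s)%:Z.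

Lemma prof_dist_excess x u s : prof e x u s = dist_excess u s - dist_excess u x.
Proof. by rewrite /prof /dist_excess opprB addrA subrK. Qed.

Lemma dist_excess_le_estimate u w s : s \in R ->
  dist_excess u s <= anchor_estimate u w s.
Proof.
move=> sR; have := dist_lt_distR_add_card u connected connR sR.
have := distR_le e w sR; rewrite /dist_excess /anchor_estimate /hprof.
case dhat_m: dhat => [m|]; last lia.
have := dist_le_dhat connected coll s dhat_m; lia.
Qed.

Lemma dist_excess_eq_estimate u s : inU Ps u -> s \in R ->
  exists2 w, anchor e R Ps w & dist_excess u s = anchor_estimate u w s.
Proof.
move=> uU sR; have [w anc_w [m dhat_m m_le]] := exists_anchor_dhat connected coll uU sR.
exists w => //; apply/eqP; rewrite eq_le dist_excess_le_estimate //=.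
have := dist_lt_distR_add_card u connected connR sR; have := distR_le e w sR.
have := dist_le_dhat connected coll s dhat_m.
rewrite /dist_excess /anchor_estimate /hprof dhat_m; lia.
Qed.

Lemma dist_excess_le u1 u2 s : inU Ps u2 -> s \in R ->
  (forall w, anchor e R Ps w -> hprof e R Ps u1 w = hprof e R Ps u2 w) ->
  dist_excess u1 s <= dist_excess u2 s.
Proof.
move=> u2U sR hprof_eq; have [w anc_w ->] := dist_excess_eq_estimate u2U sR.
by rewrite /anchor_estimate -hprof_eq //; exact: dist_excess_le_estimate.
Qed.

End DistExcess.

Theorem lemma3p5 (T : finType) (e : rel T) (R : {set T}) (sR : T)
    (Ps : seq (seq T)) :
  simple_graph e -> graph_connected e ->
  set_connected e R -> sR \in R ->
  shortest_collection e R Ps ->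
  forall u1 u2 : T, inU Ps u1 -> inU Ps u2 ->
  (forall w, anchor e R Ps w -> hprof e R Ps u1 w = hprof e R Ps u2 w) ->
  forall s, s \in R -> prof e sR u1 s = prof e sR u2 s.
Proof.
(* Edges are only ever followed forwards. *)
move=> _ connected connR sR_in coll u1 u2 u1U u2U hprof_eq s s_in.
have excess_eq y : y \in R -> dist_excess e R u1 y = dist_excess e R u2 y.
  move=> yR; apply/le_anti.
  by rewrite !(dist_excess_le connected connR coll) // => w /hprof_eq.
by rewrite !(prof_dist_excess e R sR) !excess_eq.
Qed.
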